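(* Consider the network Polya contagion process on the complete graph on $N$ nodes with $\Delta_{r,i}(t)=\Delta_{b,i}(t)=\Delta>0$ for all nodes $i$ and times $t$. Let $\bar T=\sum_{k=1}^N T_k$, $\rho=\frac{\sum_{k=1}^N R_k}{\bar T}$ and $\delta=\frac{N\Delta}{\bar T}$. Then for every node $i$ and every $n\ge 2$, \[ P(Z_{i,n}=1,Z_{i,1}=1)=\rho\,\frac{\rho+(1+(N-1)\rho)\frac{\delta}{N}}{1+\delta}, \] and moreover, for any other node $k$ (and $n\ge 2$), \[ P(Z_{k,n}=1,Z_{i,1}=1)=\rho\,\frac{\rho+(1+(N-1)\rho)\frac{\delta}{N}}{1+\delta}. \]
   Context: Network Polya contagion process: $\mathcal{G}=(V,\mathcal{E})$ is a connected undirected graph, $V=\{1,\dots,N\}$, $\mathcal{N}_i'=\{i\}\cup\{v:(i,v)\in\mathcal{E}\}$; the complete graph has $\mathcal{N}_i'=V$ for all $i$. Each node $i$ has an urn initially containing $R_i\in\mathbb{Z}_{>0}$ red and $B_i\in\mathbb{Z}_{>0}$ black balls, $T_i=R_i+B_i$. The super urn of node $i$ is the union of the urns of nodes in $\mathcal{N}_i'$. At each time $t=1,2,\dots$ every node $i$ simultaneously draws from its super urn; $Z_{i,t}=1$ if red, $0$ if black; then $\Delta_{r,i}(t)$ red balls (if red drawn) or $\Delta_{b,i}(t)$ black balls (if black drawn) are added to node $i$'s own urn. Given the whole history, the time-$n$ draws are conditionally independent with $P(Z_{i,n}=1\mid\{Z_j^{n-1}\}_{j=1}^N)=\dfrac{\sum_{j\in\mathcal{N}_i'}\big(R_j+\sum_{t=1}^{n-1}Z_{j,t}\Delta_{r,j}(t)\big)}{\sum_{j\in\mathcal{N}_i'}\big(T_j+\sum_{t=1}^{n-1}(Z_{j,t}\Delta_{r,j}(t)+(1-Z_{j,t})\Delta_{b,j}(t))\big)}$.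 *)

From HB Require Import structures.
From mathcomp Require Import all_boot all_order all_algebra.
Set Implicit Arguments. Unset Strict Implicit. Unset Printing Implicit Defensive.
Import Order.TTheory GRing.Theory Num.Theory.
Local Open Scope ring_scope.

(* A history of the first n draw rounds of N nodes: z s j = (Z_{j,s+1} = 1),
   i.e. rounds are indexed 0-based by s : 'I_n (s stands for time s+1). *)
Definition history (N n : nat) := {ffun 'I_n -> {ffun 'I_N -> bool}}.

(* Z_{i,t} for 1-based time t (false if t is out of range 1..n). *)
Definition Zv (N n : nat) (z : history N n) (t : nat) (i : 'I_N) : bool :=
  match (insub t.-1 : option 'I_n) with Some s => z s i | None => false end.

Definition in_closed_nbhd (N : nat) (nb : 'I_N -> 'I_N -> bool) (i j : 'I_N) : bool :=
  (j == i) || nb i j.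

Definition complete_nb (N : nat) : 'I_N -> 'I_N -> bool := fun _ _ => true.

(* Red balls in urn j before the draw at (1-based) time t+1, i.e. after the
   draws of rounds 1..t. Dr j s / Db j s = Delta_{r,j}(s), Delta_{b,j}(s). *)
Definition red_count (N n : nat) (Rb : 'I_N -> nat) (Dr : 'I_N -> nat -> nat)
    (z : history N n) (t : nat) (j : 'I_N) : nat :=
  (Rb j + \sum_(s < n | (s < t)%N) (if z s j then Dr j s.+1 else 0))%N.

Definition total_count (N n : nat) (Rb Bb : 'I_N -> nat) (Dr Db : 'I_N -> nat -> nat)
    (z : history N n) (t : nat) (j : 'I_N) : nat :=
  (Rb j + Bb j + \sum_(s < n | (s < t)%N)
      (if z s j then Dr j s.+1 else Db j s.+1))%N.

(* P(Z_{i,t+1} = 1 | history of rounds 1..t). *)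
Definition draw_prob (R : realFieldType) (N n : nat) (nb : 'I_N -> 'I_N -> bool)
    (Rb Bb : 'I_N -> nat) (Dr Db : 'I_N -> nat -> nat)
    (z : history N n) (t : nat) (i : 'I_N) : R :=
  (\sum_(j | in_closed_nbhd nb i j) red_count Rb Dr z t j)%N%:R
  / (\sum_(j | in_closed_nbhd nb i j) total_count Rb Bb Dr Db z t j)%N%:R.

(* Probability of a full history of n rounds: product of the conditional
   (independent given the past) Bernoulli draw probabilities. *)
Definition path_prob (R : realFieldType) (N n : nat) (nb : 'I_N -> 'I_N -> bool)
    (Rb Bb : 'I_N -> nat) (Dr Db : 'I_N -> nat -> nat) (z : history N n) : R :=
  \prod_(t < n) \prod_(i < N)
     (let p := draw_prob R nb Rb Bb Dr Db z t i in if z t i then p else 1 - p).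

Definition npp_prob (R : realFieldType) (N n : nat) (nb : 'I_N -> 'I_N -> bool)
    (Rb Bb : 'I_N -> nat) (Dr Db : 'I_N -> nat -> nat)
    (E : history N n -> bool) : R :=
  \sum_(z : history N n | E z) path_prob R nb Rb Bb Dr Db z.

(* On the complete graph with constant reinforcement every node draws from the
   same super urn: after t rounds with c red draws in total its red proportion is
   q_t = (sum R + Delta c) / (Tbar + t N Delta).  Given the past, the N draws of
   the next round are i.i.d. Bernoulli(q_t), and the round adds N Delta balls of
   which Delta times a Binomial(N, q_t) number are red, so (q_t) is a martingale.
   Hence P(Z_{k,n} = 1, Z_{i,1} = 1) = E[Z_{i,1} q_{n-1}] = E[Z_{i,1} q_1], and the
   latter only involves the first two moments of the first round. *)

From HB Require Import structures.
From mathcomp Require Import all_boot all_order all_algebra.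
From mathcomp Require Import ring zify.
Set Implicit Arguments. Unset Strict Implicit. Unset Printing Implicit Defensive.
Import Order.TTheory GRing.Theory Num.Theory.
Local Open Scope ring_scope.

Definition ffun_rcons (X : Type) (m : nat) (w : {ffun 'I_m -> X}) (x : X) :
    {ffun 'I_m.+1 -> X} :=
  [ffun s => if unlift ord_max s is Some s' then w s' else x].

Section FfunRcons.
Variables (X : Type) (m : nat) (w : {ffun 'I_m -> X}) (x : X).

Lemma ffun_rcons_lift s : ffun_rcons w x (lift ord_max s) = w s.
Proof. by rewrite ffunE liftK. Qed.

Lemma ffun_rcons_last : ffun_rcons w x ord_max = x.
Proof. by rewrite ffunE unlift_none. Qed.

Lemma ffun_rcons_widen s : ffun_rcons w x (widen_ord (leqnSn m) s) = w s.
Proof.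
have -> : widen_ord (leqnSn m) s = lift ord_max s.
  by apply: val_inj; rewrite /= /bump leqNgt ltn_ord.
exact: ffun_rcons_lift.
Qed.

End FfunRcons.

Lemma ffun_rcons_ord0 (X : Type) (m : nat) (w : {ffun 'I_m.+1 -> X}) (x : X) :
  ffun_rcons w x ord0 = w ord0.
Proof.
have -> : ord0 = lift ord_max (ord0 : 'I_m.+1) by apply: val_inj.
exact: ffun_rcons_lift.
Qed.

Lemma big_ffun_rcons (V : nmodType) (X : finType) (m : nat)
    (F : {ffun 'I_m.+1 -> X} -> V) :
  \sum_(z : {ffun 'I_m.+1 -> X}) F z =
  \sum_(w : {ffun 'I_m -> X}) \sum_(x : X) F (ffun_rcons w x).
Proof.
rewrite pair_big /= (reindex (fun p => ffun_rcons p.1 p.2)) //=.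
exists (fun z => ([ffun s => z (lift ord_max s)], z ord_max)).
  move=> [w x] _; rewrite ffun_rcons_last; congr (_, _).
  by apply/ffunP => s; rewrite ffunE ffun_rcons_lift.
move=> z _; apply/ffunP => s; rewrite ffunE.
by case: unliftP => [s' ->|->] //; rewrite ffunE.
Qed.

Definition bern (R : nzRingType) (p : R) (b : bool) : R := if b then p else 1 - p.

Section ProductBernoulli.
Variables (R : comNzRingType) (N : nat) (p : R).

Lemma sum_prod_bern (h : 'I_N -> bool -> R) :
  \sum_(x : {ffun 'I_N -> bool}) \prod_i (bern p (x i) * h i (x i)) =
  \prod_i (p * h i true + (1 - p) * h i false).
Proof.
rewrite -(bigA_distr_bigA (fun i b => bern p b * h i b)) /=.
by apply: eq_bigr => i _; rewrite big_bool.
Qed.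

Lemma bern_moment (A : {set 'I_N}) :
  \sum_(x : {ffun 'I_N -> bool}) \prod_i bern p (x i) * \prod_(j in A) (x j)%:R
  = p ^+ #|A|.
Proof.
pose h i (b : bool) : R := if i \in A then b%:R else 1.
transitivity (\sum_(x : {ffun 'I_N -> bool}) \prod_i (bern p (x i) * h i (x i))).
  by apply: eq_bigr => x _; rewrite big_split /= [X in _ * X]big_mkcond.
rewrite sum_prod_bern -prodr_const [RHS]big_mkcond /=; apply: eq_bigr => i _.
by rewrite /h; case: (i \in A) => /=; ring.
Qed.

Lemma bern_total : \sum_(x : {ffun 'I_N -> bool}) \prod_i bern p (x i) = 1.
Proof.
rewrite -[RHS](expr0 p) -(cards0 'I_N) -bern_moment.
by apply: eq_bigr => x _; rewrite big_set0 mulr1.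
Qed.

Lemma bern_mean k :
  \sum_(x : {ffun 'I_N -> bool}) \prod_i bern p (x i) * (x k)%:R = p.
Proof.
rewrite -[RHS]expr1 -(cards1 k) -bern_moment.
by apply: eq_bigr => x _; rewrite big_set1.
Qed.

Lemma bern_mean2 j k : j != k ->
  \sum_(x : {ffun 'I_N -> bool}) \prod_i bern p (x i) * ((x j)%:R * (x k)%:R)
  = p * p.
Proof.
move=> jk; have -> : p * p = p ^+ #|[set j; k]| by rewrite cards2 jk expr2.
rewrite -bern_moment; apply: eq_bigr => x _.
by rewrite big_setU1 ?big_set1 // in_set1.
Qed.

Lemma bern_mean_sum :
  \sum_(x : {ffun 'I_N -> bool}) \prod_i bern p (x i) * (\sum_j x j)%N%:R
  = N%:R * p.
Proof.
under eq_bigr do rewrite natr_sum mulr_sumr.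
rewrite exchange_big /=; under eq_bigr do rewrite bern_mean.
by rewrite sumr_const card_ord mulr_natl.
Qed.

Lemma bern_mean_mul_sum i :
  \sum_(x : {ffun 'I_N -> bool}) \prod_i bern p (x i) * ((x i)%:R * (\sum_j x j)%N%:R)
  = p + N.-1%:R * (p * p).
Proof.
under eq_bigr do rewrite natr_sum !mulr_sumr.
rewrite exchange_big /= (bigD1 i) //=; congr (_ + _).
  rewrite -[RHS](bern_mean i); apply: eq_bigr => x _.
  by case: (x i); rewrite ?mulr1 ?mulr0.
rewrite (eq_bigr (fun _ => p * p)); last by move=> j ji; rewrite bern_mean2 // eq_sym.
by rewrite sumr_const cardC1 card_ord mulr_natl.
Qed.

End ProductBernoulli.

Definition reds_drawn (N m : nat) (z : history N m) (t : nat) : nat :=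
  (\sum_(s < m | (s < t)%N) \sum_(j < N) (z s j : nat))%N.

Section CompleteGraph.
Variables (R : realFieldType) (N : nat) (Rb Bb : 'I_N -> nat) (D : nat).

Definition urn_ratio (c t : nat) : R :=
  (\sum_(k < N) Rb k + D * c)%N%:R / (\sum_(k < N) (Rb k + Bb k) + t * (N * D))%N%:R.

Lemma draw_prob_complete m (z : history N m) t i : (t <= m)%N ->
  draw_prob R (@complete_nb N) Rb Bb (fun _ _ => D) (fun _ _ => D) z t i
  = urn_ratio (reds_drawn z t) t.
Proof.
move=> le_tm; have nbT : in_closed_nbhd (@complete_nb N) i =1 predT.
  by move=> j; rewrite /in_closed_nbhd orbT.
rewrite /draw_prob /urn_ratio !(eq_bigl _ _ nbT); congr (_%:R / _%:R).
  rewrite /red_count big_split /=; congr (_ + _)%N.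
  rewrite exchange_big /= big_distrr /=; apply: eq_bigr => s _.
  rewrite big_distrr /=; apply: eq_bigr => j _.
  by case: (z s j); rewrite ?muln1 ?muln0.
rewrite /total_count big_split /=; congr (_ + _)%N.
under eq_bigr do (under eq_bigr do rewrite if_same;
  rewrite -(big_ord_widen _ (fun _ => D) le_tm) big_const_ord iter_addn_0).
by rewrite sum_nat_const card_ord; lia.
Qed.

Definition path_weight m (z : history N m) : R :=
  \prod_(t < m) \prod_(i < N) bern (urn_ratio (reds_drawn z t) t) (z t i).

Lemma path_prob_complete m (z : history N m) :
  path_prob R (@complete_nb N) Rb Bb (fun _ _ => D) (fun _ _ => D) z = path_weight z.
Proof.
apply: eq_bigr => t _; apply: eq_bigr => i _.
by rewrite /= draw_prob_complete // ltnW.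
Qed.

Lemma reds_drawn_rcons m (w : history N m) x t : (t <= m)%N ->
  reds_drawn (ffun_rcons w x : history N m.+1) t = reds_drawn w t.
Proof.
move=> le_tm; rewrite /reds_drawn big_mkcond big_ord_recr /= ltnNge le_tm addn0.
by rewrite [RHS]big_mkcond; apply: eq_bigr => s _; rewrite ffun_rcons_widen.
Qed.

Lemma reds_drawn_rcons_last m (w : history N m) x :
  reds_drawn (ffun_rcons w x : history N m.+1) m.+1 = (reds_drawn w m + \sum_j x j)%N.
Proof.
rewrite /reds_drawn big_mkcond big_ord_recr /= ltnSn ffun_rcons_last.
rewrite [in RHS]big_mkcond; congr (_ + _)%N; apply: eq_bigr => s _.
by rewrite ffun_rcons_widen ltn_ord ltnS ltnW.
Qed.

Lemma path_weight_rcons m (w : history N m) x :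
  path_weight (ffun_rcons w x : history N m.+1) =
  path_weight w * \prod_i bern (urn_ratio (reds_drawn w m) m) (x i).
Proof.
rewrite /path_weight big_ord_recr /=; congr (_ * _).
  apply: eq_bigr => t _; rewrite reds_drawn_rcons ?(ltnW (ltn_ord t)) //.
  by apply: eq_bigr => i _; rewrite ffun_rcons_widen.
by rewrite reds_drawn_rcons //; apply: eq_bigr => i _; rewrite ffun_rcons_last.
Qed.

Lemma urn_ratio_next c s t :
  urn_ratio (c + s) t.+1 =
  (\sum_(k < N) Rb k + D * c)%N%:R / (\sum_(k < N) (Rb k + Bb k) + t.+1 * (N * D))%N%:R
  + D%:R / (\sum_(k < N) (Rb k + Bb k) + t.+1 * (N * D))%N%:R * s%:R.
Proof. by rewrite /urn_ratio mulnDr addnA natrD mulrDl natrM mulrAC. Qed.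

Hypothesis total_gt0 : (0 < \sum_(k < N) (Rb k + Bb k))%N.

Lemma urn_ratio_martingale c t :
  \sum_(x : {ffun 'I_N -> bool})
     \prod_i bern (urn_ratio c t) (x i) * urn_ratio (c + \sum_j x j) t.+1
  = urn_ratio c t.
Proof.
under eq_bigr do rewrite urn_ratio_next mulrDr [X in X + _]mulrC [X in _ + X]mulrCA.
rewrite big_split /= -!mulr_sumr bern_total bern_mean_sum /urn_ratio.
set B := (\sum_(k < N) (Rb k + Bb k) + t * (N * D))%N.
have -> : (\sum_(k < N) (Rb k + Bb k) + t.+1 * (N * D) = B + N * D)%N.
  by rewrite /B mulSn; lia.
have B_gt0 : (0 < B)%N by rewrite ltn_addr.
rewrite [(B + _)%:R]natrD natrM; field.
by rewrite -natrM -natrD !pnatr_eq0 -!lt0n B_gt0 ltn_addr.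
Qed.

(* E[Z_{i,1} q_{m+1}] in the notation of the header (rounds are 0-based in
   [history]). *)
Definition mean_first_red_ratio (i : 'I_N) m : R :=
  \sum_(w : history N m.+1)
     path_weight w * (w ord0 i)%:R * urn_ratio (reds_drawn w m.+1) m.+1.

Lemma mean_first_red_ratio_succ i m :
  mean_first_red_ratio i m.+1 = mean_first_red_ratio i m.
Proof.
rewrite /mean_first_red_ratio big_ffun_rcons; apply: eq_bigr => w _.
set q := urn_ratio (reds_drawn w m.+1) m.+1.
transitivity (path_weight w * (w ord0 i)%:R * \sum_(x : {ffun 'I_N -> bool})
  \prod_j bern q (x j) * urn_ratio (reds_drawn w m.+1 + \sum_j x j) m.+2).
  rewrite mulr_sumr; apply: eq_bigr => x _.
  by rewrite path_weight_rcons ffun_rcons_ord0 reds_drawn_rcons_last; ring.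
by rewrite urn_ratio_martingale.
Qed.

Lemma mean_first_red_ratio_const i m :
  mean_first_red_ratio i m = mean_first_red_ratio i 0.
Proof. by elim: m => // m IHm; rewrite mean_first_red_ratio_succ. Qed.

Lemma mean_first_red_ratio0 i :
  let Tbar : R := (\sum_(k < N) (Rb k + Bb k))%N%:R in
  let rho : R := (\sum_(k < N) Rb k)%N%:R / Tbar in
  let delta : R := (N * D)%N%:R / Tbar in
  mean_first_red_ratio i 0
  = rho * (rho + (1 + (N%:R - 1) * rho) * (delta / N%:R)) / (1 + delta).
Proof.
move=> Tbar rho delta; rewrite /mean_first_red_ratio big_ffun_rcons.
set r := urn_ratio 0 0.
have first_round (w : {ffun 'I_0 -> {ffun 'I_N -> bool}}) :
  \sum_x path_weight (ffun_rcons w x : history N 1) * (ffun_rcons w x ord0 i)%:R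
     * urn_ratio (reds_drawn (ffun_rcons w x : history N 1) 1) 1
  = \sum_(x : {ffun 'I_N -> bool})
     \prod_j bern r (x j) * ((x i)%:R * urn_ratio (0 + \sum_j x j) 1).
  apply: eq_bigr => x _; have -> : ord0 = ord_max :> 'I_1 by apply: val_inj.
  rewrite path_weight_rcons reds_drawn_rcons_last ffun_rcons_last.
  by rewrite /path_weight /reds_drawn !big_ord0 mul1r -mulrA.
rewrite (eq_bigr _ (fun w _ => first_round w)) sumr_const card_ffun !card_ord expn0 mulr1n.
pose den := (\sum_(k < N) (Rb k + Bb k) + 1 * (N * D))%N%:R : R.
pose a := (\sum_(k < N) Rb k + D * 0)%N%:R / den.
transitivity (\sum_(x : {ffun 'I_N -> bool})
  (a * (\prod_j bern r (x j) * (x i)%:R)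
   + D%:R / den * (\prod_j bern r (x j) * ((x i)%:R * (\sum_j x j)%N%:R)))).
  by apply: eq_bigr => x _; rewrite urn_ratio_next -/den -/a; ring.
rewrite big_split /= -!mulr_sumr bern_mean bern_mean_mul_sum /a /den /r /urn_ratio.
have N_gt0 : (0 < N)%N by apply: leq_ltn_trans (ltn_ord i).
rewrite /rho /delta /Tbar -subn1 natrB // !muln0 !mul0n !mul1n !addn0 natrD natrM.
field.
by rewrite -natrM -natrD !pnatr_eq0 -!lt0n total_gt0 ltn_addr.
Qed.

Lemma sum_path_weight_last_first (i k : 'I_N) m :
  \sum_(z : history N m.+2) path_weight z * (z ord_max k && z ord0 i)%:R
  = mean_first_red_ratio i m.
Proof.
rewrite /mean_first_red_ratio big_ffun_rcons; apply: eq_bigr => w _.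
set q := urn_ratio (reds_drawn w m.+1) m.+1.
transitivity (path_weight w * (w ord0 i)%:R *
  \sum_(x : {ffun 'I_N -> bool}) \prod_j bern q (x j) * (x k)%:R).
  rewrite mulr_sumr; apply: eq_bigr => x _.
  by rewrite path_weight_rcons ffun_rcons_ord0 ffun_rcons_last -mulnb natrM; ring.
by rewrite bern_mean.
Qed.

End CompleteGraph.

Lemma Zv_ord (N n : nat) (z : history N n) (s : 'I_n) i : Zv z s.+1 i = z s i.
Proof. by rewrite /Zv /= valK. Qed.

Theorem lemma2 (R : realFieldType) (N : nat) (Rb Bb : 'I_N -> nat) (Delta n : nat) :
  (forall k, 0 < Rb k)%N -> (forall k, 0 < Bb k)%N -> (0 < Delta)%N -> (2 <= n)%N ->
  let Tbar : R := (\sum_(k < N) (Rb k + Bb k))%N%:R in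
  let rho : R := (\sum_(k < N) Rb k)%N%:R / Tbar in
  let delta : R := (N * Delta)%N%:R / Tbar in
  let P := @npp_prob R N n (@complete_nb N) Rb Bb
             (fun _ _ => Delta) (fun _ _ => Delta) in
  forall i : 'I_N,
    P (fun z => Zv z n i && Zv z 1 i)
      = rho * (rho + (1 + (N%:R - 1) * rho) * (delta / N%:R)) / (1 + delta)
    /\ (forall k : 'I_N, k != i ->
        P (fun z => Zv z n k && Zv z 1 i)
          = rho * (rho + (1 + (N%:R - 1) * rho) * (delta / N%:R)) / (1 + delta)).
Proof.
move=> Rb_gt0 _ _; case: n => [|[|m]] // _ Tbar rho delta P i.
have total_gt0 : (0 < \sum_(k < N) (Rb k + Bb k))%N.
  by rewrite (bigD1 i) //= -addnA ltn_addr ?Rb_gt0.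
suff joint_red k : P (fun z => Zv z m.+2 k && Zv z 1 i)
   = rho * (rho + (1 + (N%:R - 1) * rho) * (delta / N%:R)) / (1 + delta).
  by split=> [|k _]; apply: joint_red.
rewrite /P /npp_prob big_mkcond /=.
transitivity (\sum_(z : history N m.+2)
  path_weight R Rb Bb Delta z * (z ord_max k && z ord0 i)%:R).
  apply: eq_bigr => z _; rewrite path_prob_complete.
  have -> : Zv z m.+2 k = z ord_max k := Zv_ord z ord_max k.
  have -> : Zv z 1 i = z ord0 i := Zv_ord z ord0 i.
  by case: (_ && _); rewrite ?mulr1 ?mulr0.
rewrite sum_path_weight_last_first mean_first_red_ratio_const //.
exact: mean_first_red_ratio0.
Qed.
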